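(* Fix a constant $d\ge 0$. There is a routing labeling scheme for the family of rooted trees on $n$ nodes of depth at most $d$ with labels of length $\log n+\mathcal{O}(\log\log n)$ bits. The constant in the $\mathcal{O}(\cdot)$ may depend on $d$.
   Context: All logarithms are base $2$. The depth of a rooted tree is the maximum number of edges on a path from the root to a node. A (designer-port) routing labeling scheme for a family $\mathcal{T}$ of rooted trees consists of an encoder and a decoder. - The encoder is given $T\in\mathcal{T}$. It assigns a binary string (label) $\ell(u)$ to every node $u$. It also labels the edges from each node $u$ to its $\deg(u)$ children with distinct port numbers from $\{1,\dots,\deg(u)\}$; the encoder is free to choose these port numbers. - The decoder receives only $\ell(u)$ and $\ell(w)$ for nodes $u\neq w$ of some $T\in\mathcal{T}$; the value $\lceil\log n\rceil$, where $n=|T|$, may also be assumed known. It must return $0$ if the next node on the path from $u$ to $w$ is the parent of $u$. Otherwise it must return the port number of the first edge on that path. - The length of the scheme is the maximum label length over all trees in $\mathcal{T}$ and all their nodes. *)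

From Stdlib Require Import Reals Arith List.
Import ListNotations.
Open Scope R_scope.

Definition log2R (x : R) : R := ln x / ln 2.

(** A rooted tree on n nodes: nodes are 0..n-1, root r, parent function par
    with par r = r (convention), par maps nodes to nodes, and every node reaches
    the root by iterating par. *)
Definition is_rooted_tree (n r : nat) (par : nat -> nat) : Prop :=
  (r < n)%nat /\ par r = r /\
  (forall u, (u < n)%nat -> (par u < n)%nat) /\
  (forall u, (u < n)%nat -> exists k, Nat.iter k par u = r).

Definition depth_le (d n r : nat) (par : nat -> nat) : Prop :=
  forall u, (u < n)%nat -> exists k, (k <= d)%nat /\ Nat.iter k par u = r.

Definition is_child (n r : nat) (par : nat -> nat) (u v : nat) : Prop :=
  (v < n)%nat /\ v <> r /\ par v = u.

Definition deg (n r : nat) (par : nat -> nat) (u : nat) : nat :=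
  length (filter (fun v => andb (negb (Nat.eqb v r)) (Nat.eqb (par v) u)) (seq 0 n)).

Definition valid_ports (n r : nat) (par : nat -> nat) (port : nat -> nat -> nat) : Prop :=
  forall u, (u < n)%nat ->
    (forall v, is_child n r par u v -> (1 <= port u v <= deg n r par u)%nat) /\
    (forall v1 v2, is_child n r par u v1 -> is_child n r par u v2 ->
        port u v1 = port u v2 -> v1 = v2).

(** If w is a descendant of u, the next node on the path is the child v of u
    that is an ancestor-or-self of w, and the decoder must return port u v;
    otherwise the next node is the parent of u and the decoder must return 0. *)
Definition routing_correct (n r : nat) (par : nat -> nat) (port : nat -> nat -> nat)
    (lab : nat -> list bool) (dec : nat -> list bool -> list bool -> nat) : Prop :=
  forall u w, (u < n)%nat -> (w < n)%nat -> u <> w ->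
    (forall v, is_child n r par u v -> (exists k, Nat.iter k par w = v) ->
        dec (Nat.log2_up n) (lab u) (lab w) = port u v) /\
    ((~ exists k, Nat.iter (S k) par w = u) ->
        dec (Nat.log2_up n) (lab u) (lab w) = 0%nat).

(* Number the children of every node in order of decreasing subtree size (heavy child
   first). Then the child reached through port p has at most a 1/p fraction of its
   parent's descendants, so the ports p_1, ..., p_k read from the root to a node satisfy
   p_1 * ... * p_k <= n, i.e. sum log2 p_i <= log2 n. The label of a node is this port
   sequence, each p_i written as log2 p_i in a fixed field of O(log log n) bits followed by
   the log2 p_i bits of p_i below its leading one. At most d fields, so the label has
   log n + O(d log log n) bits. Routing from u to w: if u's sequence is a proper prefix of
   w's, the next entry of w's sequence is the port; otherwise go to the parent. *)
From Stdlib Require Import Reals Arith List Lia Bool Lra.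
Import ListNotations.
Local Open Scope nat_scope.

Lemma length_filter_mono {A} (f g : A -> bool) (l : list A) :
  (forall x, In x l -> f x = true -> g x = true) ->
  length (filter f l) <= length (filter g l).
Proof.
  induction l as [|a l IH]; simpl; intros H; auto.
  specialize (IH (fun x Hx => H x (or_intror Hx))).
  destruct (f a) eqn:Ef, (g a) eqn:Eg; simpl; try lia.
  rewrite (H a (or_introl eq_refl) Ef) in Eg; discriminate.
Qed.

Lemma length_filter_lt {A} (f g : A -> bool) (l : list A) (a : A) :
  (forall x, In x l -> f x = true -> g x = true) ->
  In a l -> g a = true -> f a = false ->
  length (filter f l) < length (filter g l).
Proof.
  induction l as [|b l IH]; simpl; intros H Ha Hga Hfa; [contradiction|].
  pose proof (length_filter_mono f g l (fun x Hx => H x (or_intror Hx))).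
  destruct Ha as [<-|Ha].
  - rewrite Hfa, Hga; simpl; lia.
  - specialize (IH (fun x Hx => H x (or_intror Hx)) Ha Hga Hfa).
    destruct (f b) eqn:Ef, (g b) eqn:Eg; simpl; try lia.
    rewrite (H b (or_introl eq_refl) Ef) in Eg; discriminate.
Qed.

Lemma length_filter_orb {A} (f g : A -> bool) (l : list A) :
  (forall x, In x l -> f x = true -> g x = false) ->
  length (filter (fun x => f x || g x) l) = length (filter f l) + length (filter g l).
Proof.
  induction l as [|a l IH]; simpl; intros H; auto.
  specialize (IH (fun x Hx => H x (or_intror Hx))).
  destruct (f a) eqn:Ef, (g a) eqn:Eg; simpl; try lia.
  rewrite (H a (or_introl eq_refl) Ef) in Eg; discriminate.
Qed.

Lemma in_le_list_sum (l : list nat) (a : nat) : In a l -> a <= list_sum l.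
Proof. induction l as [|b l IH]; simpl; [tauto|]. intros [<-|Ha]; [|specialize (IH Ha)]; lia. Qed.

Lemma length_mul_le_list_sum (l : list nat) (m : nat) :
  (forall a, In a l -> m <= a) -> length l * m <= list_sum l.
Proof.
  induction l as [|a l IH]; simpl; intros H; auto.
  specialize (IH (fun b Hb => H b (or_intror Hb))). specialize (H a (or_introl eq_refl)). lia.
Qed.

(** * A self-delimiting code for lists of positive integers *)

(* [bits w v] is [v mod 2^w] written on [w] bits, least significant first. *)
Fixpoint bits (w v : nat) : list bool :=
  match w with 0 => [] | S w' => Nat.odd v :: bits w' (Nat.div2 v) end.

Fixpoint bits_value (l : list bool) : nat :=
  match l with [] => 0 | b :: l' => Nat.b2n b + 2 * bits_value l' end.

Lemma length_bits w v : length (bits w v) = w.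
Proof. revert v; induction w; simpl; auto. Qed.

Lemma bits_valueK w v : v < 2 ^ w -> bits_value (bits w v) = v.
Proof.
  revert v; induction w as [|w IH]; intros v Hv; simpl in *; [lia|].
  pose proof (Nat.div2_odd v) as Ev.
  rewrite IH; [lia|]. destruct (Nat.odd v); simpl in Ev; lia.
Qed.

Lemma firstn_skipn_app {A} (k : nat) (a b : list A) :
  length a = k -> firstn k (a ++ b) = a /\ skipn k (a ++ b) = b.
Proof.
  intros <-. rewrite firstn_app, skipn_app, Nat.sub_diag, firstn_all, skipn_all. simpl.
  now rewrite app_nil_r.
Qed.

Definition encode_entry (W p : nat) : list bool :=
  bits W (Nat.log2 p) ++ bits (Nat.log2 p) (p - 2 ^ Nat.log2 p).

Definition encode (W : nat) (ps : list nat) : list bool := flat_map (encode_entry W) ps.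

Fixpoint decode (fuel W : nat) (l : list bool) : list nat :=
  match fuel, l with
  | 0, _ | _, [] => []
  | S f, _ => let b := bits_value (firstn W l) in
              let l' := skipn W l in
              (2 ^ b + bits_value (firstn b l')) :: decode f W (skipn b l')
  end.

Lemma length_encode W ps :
  length (encode W ps) = W * length ps + list_sum (map Nat.log2 ps).
Proof.
  unfold encode. induction ps as [|p ps IH]; simpl; [lia|].
  rewrite length_app, IH. unfold encode_entry. rewrite length_app, !length_bits. lia.
Qed.

Lemma decode_entry fuel W b v rest : 1 <= W -> b < 2 ^ W -> v < 2 ^ b ->
  decode (S fuel) W (bits W b ++ bits b v ++ rest) = (2 ^ b + v) :: decode fuel W rest.
Proof.
  intros HW Hb Hv.
  assert (Hne : bits W b ++ bits b v ++ rest <> []).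
  { destruct W; [lia|]. discriminate. }
  destruct (bits W b ++ bits b v ++ rest) as [|x l] eqn:E; [congruence|].
  cbn [decode]. rewrite <- E.
  destruct (firstn_skipn_app W (bits W b) (bits b v ++ rest) (length_bits W b)) as [-> ->].
  rewrite bits_valueK by exact Hb.
  destruct (firstn_skipn_app b (bits b v) rest (length_bits b v)) as [-> ->].
  now rewrite bits_valueK.
Qed.

Lemma decode_encode W ps fuel :
  1 <= W -> (forall p, In p ps -> 1 <= p /\ Nat.log2 p < 2 ^ W) ->
  length ps <= fuel -> decode fuel W (encode W ps) = ps.
Proof.
  intros HW; revert fuel; induction ps as [|p ps IH]; intros fuel Hps Hfuel.
  - destruct fuel; reflexivity.
  - destruct fuel as [|fuel]; [simpl in Hfuel; lia|].
    destruct (Hps p (or_introl eq_refl)) as [Hp HpW].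
    destruct (Nat.log2_spec p Hp) as [Hlo Hhi]. simpl in Hhi.
    unfold encode; cbn [flat_map]. unfold encode_entry. rewrite <- app_assoc.
    rewrite decode_entry by lia.
    f_equal; [lia|]. apply IH; [intros; apply Hps; now right | simpl in Hfuel; lia].
Qed.

(** * Heavy-first port numbering *)

Section Tree.

Variables (n r d : nat) (par : nat -> nat).
Hypothesis tree : is_rooted_tree n r par.
Hypothesis depth : depth_le d n r par.

Lemma iter_par_root k : Nat.iter k par r = r.
Proof. induction k as [|k IH]; simpl; auto. rewrite IH. apply tree. Qed.

Lemma par_lt u : u < n -> par u < n.
Proof. apply tree. Qed.

Lemma iter_par_lt k u : u < n -> Nat.iter k par u < n.
Proof. induction k; simpl; auto using par_lt. Qed.

Lemma iter_par_drop_root k u j : Nat.iter j par u = r -> j <= k -> Nat.iter k par u = r.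
Proof.
  intros Hj Hjk. replace k with ((k - j) + j) by lia.
  now rewrite Nat.iter_add, Hj, iter_par_root.
Qed.

Lemma iter_par_cycle_root u m : u < n -> Nat.iter (S m) par u = u -> u = r.
Proof.
  intros Hu Hc. destruct (depth u Hu) as [j [_ Hj]].
  assert (Hper : forall t, Nat.iter (t * S m) par u = u).
  { induction t as [|t IH]; simpl; auto. now rewrite Nat.iter_add, IH. }
  rewrite <- (Hper j). apply (iter_par_drop_root _ _ j Hj). nia.
Qed.

(* [ancestorb x y]: [y] is an ancestor of [x] or [x] itself; depth [d] bounds the search. *)
Definition ancestorb (x y : nat) : bool :=
  existsb (fun k => Nat.iter k par x =? y) (seq 0 (S d)).

Lemma ancestorb_iff x y : x < n -> ancestorb x y = true <-> exists k, Nat.iter k par x = y.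
Proof.
  intros Hx. unfold ancestorb. rewrite existsb_exists. split.
  - intros [k [_ Hk]]. apply Nat.eqb_eq in Hk. eauto.
  - intros [k Hk]. destruct (depth x Hx) as [j [Hjd Hj]].
    destruct (le_lt_dec k d).
    + exists k. rewrite in_seq, Nat.eqb_eq. split; [lia | exact Hk].
    + exists j. rewrite in_seq, Nat.eqb_eq. split; [lia|].
      rewrite <- Hk, (iter_par_drop_root k x j Hj); [exact Hj | lia].
Qed.

Definition subtree_size (u : nat) : nat := length (filter (fun x => ancestorb x u) (seq 0 n)).

Lemma subtree_size_pos u : u < n -> 1 <= subtree_size u.
Proof.
  intros Hu. unfold subtree_size.
  apply (Nat.le_lt_trans _ (length (filter (fun _ => false) (seq 0 n)))); [lia|].
  apply (length_filter_lt _ _ _ u); auto; [discriminate | apply in_seq; lia |].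
  apply ancestorb_iff; auto. now exists 0.
Qed.

Lemma subtree_size_le u : subtree_size u <= n.
Proof. unfold subtree_size. rewrite <- (length_seq n 0) at 2. apply filter_length_le. Qed.

Definition childb (u v : nat) : bool := negb (v =? r) && (par v =? u).

Lemma is_child_iff u v : is_child n r par u v <-> v < n /\ childb u v = true.
Proof.
  unfold is_child, childb. rewrite andb_true_iff, negb_true_iff, Nat.eqb_neq, Nat.eqb_eq. tauto.
Qed.

Definition precedesb (v' v : nat) : bool :=
  (subtree_size v <? subtree_size v')
  || ((subtree_size v' =? subtree_size v) && (v' <? v)).

Lemma precedesb_irrefl v : precedesb v v = false.
Proof. unfold precedesb. rewrite !Nat.ltb_irrefl. now destruct (_ =? _). Qed.

Lemma precedesb_trans a b c : precedesb a b = true -> precedesb b c = true -> precedesb a c = true.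
Proof.
  unfold precedesb. rewrite !orb_true_iff, !andb_true_iff, !Nat.ltb_lt, !Nat.eqb_eq. lia.
Qed.

Lemma precedesb_total a b : a <> b -> precedesb a b = true \/ precedesb b a = true.
Proof. unfold precedesb. rewrite !orb_true_iff, !andb_true_iff, !Nat.ltb_lt, !Nat.eqb_eq. lia. Qed.

Lemma precedesb_size v' v : precedesb v' v = true -> subtree_size v <= subtree_size v'.
Proof. unfold precedesb. rewrite orb_true_iff, andb_true_iff, Nat.ltb_lt, Nat.eqb_eq. lia. Qed.

Definition preceding_siblings (u v : nat) : list nat :=
  filter (fun v' => childb u v' && precedesb v' v) (seq 0 n).

Definition heavy_port (u v : nat) : nat := S (length (preceding_siblings u v)).

Lemma heavy_port_lt_preceding u v1 v2 :
  v1 < n -> childb u v1 = true -> precedesb v1 v2 = true -> heavy_port u v1 < heavy_port u v2.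
Proof.
  intros Hv1 Hc Hp. unfold heavy_port, preceding_siblings. apply -> Nat.succ_lt_mono.
  apply (length_filter_lt _ _ _ v1).
  - intros x _ Hx. apply andb_true_iff in Hx as [Hx Hx'].
    now rewrite Hx, (precedesb_trans _ _ _ Hx' Hp).
  - apply in_seq; lia.
  - now rewrite Hc, Hp.
  - now rewrite precedesb_irrefl, andb_false_r.
Qed.

Lemma heavy_port_le_deg u v : is_child n r par u v -> heavy_port u v <= deg n r par u.
Proof.
  intros Hc. apply is_child_iff in Hc as [Hv Hc].
  apply (length_filter_lt _ _ _ v).
  - intros x _ Hx. now apply andb_true_iff in Hx as [Hx _].
  - apply in_seq; lia.
  - exact Hc.
  - now rewrite precedesb_irrefl, andb_false_r.
Qed.

Lemma heavy_port_inj u v1 v2 : is_child n r par u v1 -> is_child n r par u v2 ->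
  heavy_port u v1 = heavy_port u v2 -> v1 = v2.
Proof.
  intros H1 H2 Hp. apply is_child_iff in H1 as [Hv1 H1]; apply is_child_iff in H2 as [Hv2 H2].
  destruct (Nat.eq_dec v1 v2) as [|Hne]; auto.
  destruct (precedesb_total _ _ Hne) as [Hb|Hb].
  - pose proof (heavy_port_lt_preceding u v1 v2 Hv1 H1 Hb). lia.
  - pose proof (heavy_port_lt_preceding u v2 v1 Hv2 H2 Hb). lia.
Qed.

Lemma heavy_ports_valid : valid_ports n r par heavy_port.
Proof.
  intros u _. split; [|apply heavy_port_inj].
  intros v Hc. split; [unfold heavy_port; lia | now apply heavy_port_le_deg].
Qed.

Lemma child_ancestor_unique u v1 v2 x : x < n ->
  childb u v1 = true -> childb u v2 = true ->
  ancestorb x v1 = true -> ancestorb x v2 = true -> v1 = v2.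
Proof.
  intros Hx C1 C2 A1 A2.
  apply ancestorb_iff in A1 as [k1 K1]; apply ancestorb_iff in A2 as [k2 K2]; auto.
  (* If [a] lay [S m] levels below [b] on the path from [x], then [par^m u = b], so [u]
     would lie on a cycle, hence be the root, whose only ancestor is itself. *)
  assert (below : forall a b ka kb, childb u a = true -> childb u b = true ->
            Nat.iter ka par x = a -> Nat.iter kb par x = b -> ka <= kb -> a = b).
  { clear k1 k2 K1 K2 C1 C2. intros a b ka kb Ca Cb Ka Kb Hle.
    unfold childb in Ca, Cb.
    rewrite andb_true_iff, negb_true_iff, Nat.eqb_neq, Nat.eqb_eq in Ca, Cb.
    replace kb with ((kb - ka) + ka) in Kb by lia. rewrite Nat.iter_add, Ka in Kb.
    destruct (kb - ka) as [|m]; [exact Kb|].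
    rewrite Nat.iter_succ_r, (proj2 Ca) in Kb.
    assert (Hu : u < n) by (rewrite <- (proj2 Ca), <- Ka; apply par_lt, iter_par_lt, Hx).
    assert (Hur : u = r).
    { apply (iter_par_cycle_root u m Hu). now rewrite Nat.iter_succ, Kb, (proj2 Cb). }
    subst u. rewrite iter_par_root in Kb. now destruct (proj1 Cb). }
  destruct (le_lt_dec k1 k2).
  - now apply (below v1 v2 k1 k2).
  - symmetry. apply (below v2 v1 k2 k1); auto; lia.
Qed.

Lemma count_below_siblings u (sibs : list nat) : NoDup sibs -> (forall s, In s sibs -> childb u s = true) ->
  length (filter (fun x => existsb (ancestorb x) sibs) (seq 0 n)) = list_sum (map subtree_size sibs).
Proof.
  induction sibs as [|s sibs IH]; intros ND HS.
  - simpl. now induction (seq 0 n).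
  - inversion ND as [|? ? Hs ND']; subst. simpl. rewrite length_filter_orb.
    + rewrite IH; auto. intros; apply HS; now right.
    + intros x Hx A1. apply in_seq in Hx. apply not_true_iff_false.
      intros E. apply existsb_exists in E as [s' [Hs' A2]].
      assert (s = s') as <- by (apply (child_ancestor_unique u s s' x); auto; [lia | apply HS..];
                                 simpl; auto).
      contradiction.
Qed.

(* The [heavy_port u v] children of [u] preceding [v] or equal to it have disjoint
   subtrees inside that of [u], each at least as large as that of [v]. *)
Lemma heavy_port_mul_size_le u v :
  is_child n r par u v -> heavy_port u v * subtree_size v <= subtree_size u.
Proof.
  intros Hc. apply is_child_iff in Hc as [Hv Hc].
  set (sibs := v :: preceding_siblings u v).
  assert (ND : NoDup sibs).
  { constructor; [|apply NoDup_filter, seq_NoDup].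
    intros Hin. apply filter_In in Hin as [_ Hin].
    now rewrite precedesb_irrefl, andb_false_r in Hin. }
  assert (HS : forall s, In s sibs -> childb u s = true /\ subtree_size v <= subtree_size s).
  { intros s [<-|Hs]; [auto|]. apply filter_In in Hs as [_ Hs].
    apply andb_true_iff in Hs as [Hs Hp]. auto using precedesb_size. }
  change (heavy_port u v) with (length sibs). rewrite <- (length_map subtree_size sibs).
  eapply Nat.le_trans; [apply length_mul_le_list_sum|].
  { intros a Ha. apply in_map_iff in Ha as [s [<- Hs]]. now apply HS. }
  rewrite <- (count_below_siblings u sibs ND (fun s Hs => proj1 (HS s Hs))).
  apply length_filter_mono. intros x Hx E. apply in_seq in Hx.
  apply existsb_exists in E as [s [Hs A]].
  apply ancestorb_iff in A as [k K]; [|lia]. apply ancestorb_iff; [lia|].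
  exists (S k). rewrite Nat.iter_succ, K.
  destruct (HS s Hs) as [Cs _]. unfold childb in Cs. apply andb_true_iff in Cs as [_ Cs].
  now apply Nat.eqb_eq.
Qed.

(** * Port paths *)

(* The ports read along the path from the root down to [w]; the fuel [d] suffices by
   the depth bound. *)
Fixpoint port_path_fuel (fuel w : nat) : list nat :=
  match fuel with
  | 0 => []
  | S f => if w =? r then [] else port_path_fuel f (par w) ++ [heavy_port (par w) w]
  end.

Definition port_path (w : nat) : list nat := port_path_fuel d w.

Lemma port_path_fuel_enough f g x : Nat.iter f par x = r -> f <= g ->
  port_path_fuel g x = port_path_fuel f x.
Proof.
  revert x g; induction f as [|f IH]; intros x g Hx Hg.
  - simpl in Hx. subst x. destruct g; simpl; now rewrite ?Nat.eqb_refl.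
  - destruct g as [|g]; [lia|]. simpl. destruct (x =? r); auto.
    rewrite (IH (par x) g); auto; [now rewrite <- Nat.iter_succ_r | lia].
Qed.

Lemma port_path_root : port_path r = [].
Proof. unfold port_path. destruct d; simpl; now rewrite ?Nat.eqb_refl. Qed.

Lemma port_path_par x : x < n -> x <> r ->
  port_path x = port_path (par x) ++ [heavy_port (par x) x].
Proof.
  intros Hx Hr. destruct (depth x Hx) as [[|k] [Hk Kx]]; [simpl in Kx; congruence|].
  unfold port_path. rewrite (port_path_fuel_enough (S k)) by auto.
  rewrite Nat.iter_succ_r in Kx. rewrite (port_path_fuel_enough k d (par x)) by (auto; lia).
  simpl. apply Nat.eqb_neq in Hr. now rewrite Hr.
Qed.

Lemma length_port_path x : length (port_path x) <= d.
Proof.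
  unfold port_path. generalize d as f. intros f. revert x.
  induction f as [|f IH]; intros x; simpl; auto. destruct (x =? r); simpl; [lia|].
  rewrite length_app. specialize (IH (par x)). simpl. lia.
Qed.

Lemma port_path_pos x p : In p (port_path x) -> 1 <= p.
Proof.
  unfold port_path. generalize d as f. intros f. revert x.
  induction f as [|f IH]; intros x; simpl; [tauto|]. destruct (x =? r); [simpl; tauto|].
  intros H. apply in_app_or in H as [H|[<-|[]]]; eauto. unfold heavy_port; lia.
Qed.

(* Since [log2] is superadditive on products, the ports along the path from the root
   telescope against the subtree sizes. *)
Lemma port_path_log2_sum_le x : x < n ->
  list_sum (map Nat.log2 (port_path x)) + Nat.log2 (subtree_size x) <= Nat.log2 n.
Proof.
  intros Hx. destruct (depth x Hx) as [k [_ K]]. revert x Hx K.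
  induction k as [|k IH]; intros x Hx K.
  - simpl in K; subst. rewrite port_path_root.
    apply Nat.log2_le_mono, subtree_size_le.
  - destruct (Nat.eq_dec x r) as [->|Hr].
    + rewrite port_path_root. apply Nat.log2_le_mono, subtree_size_le.
    + rewrite port_path_par, map_app, list_sum_app by auto. simpl.
      rewrite Nat.iter_succ_r in K. specialize (IH (par x) (par_lt x Hx) K).
      assert (Hc : is_child n r par (par x) x) by (repeat split; auto).
      pose proof (heavy_port_mul_size_le _ _ Hc) as Hmul.
      pose proof (Nat.log2_mul_below (heavy_port (par x) x) (subtree_size x)
                    ltac:(unfold heavy_port; lia) (subtree_size_pos x Hx)).
      pose proof (Nat.log2_le_mono _ _ Hmul). lia.
Qed.

Lemma port_path_descendant k w v : w < n -> Nat.iter k par w = v ->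
  exists t, port_path w = port_path v ++ t.
Proof.
  revert w; induction k as [|k IH]; intros w Hw K.
  - simpl in K; subst. exists []. now rewrite app_nil_r.
  - destruct (Nat.eq_dec w r) as [->|Hr].
    + rewrite iter_par_root in K. subst. exists []. now rewrite app_nil_r.
    + rewrite Nat.iter_succ_r in K. destruct (IH (par w) (par_lt w Hw) K) as [t Ht].
      exists (t ++ [heavy_port (par w) w]). now rewrite port_path_par, Ht, app_assoc.
Qed.

Lemma port_path_nil x : x < n -> port_path x = [] -> x = r.
Proof.
  intros Hx E. destruct (Nat.eq_dec x r) as [|Hr]; auto.
  rewrite port_path_par in E by auto. now destruct (port_path (par x)).
Qed.

Lemma port_path_inj x y : x < n -> y < n -> port_path x = port_path y -> x = y.
Proof.
  intros Hx. destruct (depth x Hx) as [k [_ K]]. revert x y Hx K.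
  induction k as [|k IH]; intros x y Hx K Hy E.
  - simpl in K; subst. rewrite port_path_root in E. symmetry. now apply port_path_nil.
  - destruct (Nat.eq_dec x r) as [->|Hxr].
    + rewrite port_path_root in E. symmetry. now apply port_path_nil.
    + destruct (Nat.eq_dec y r) as [->|Hyr].
      * rewrite port_path_root in E. now apply port_path_nil.
      * rewrite (port_path_par x), (port_path_par y) in E by auto.
        apply app_inj_tail in E as [E1 E2]. rewrite Nat.iter_succ_r in K.
        assert (Hp : par x = par y) by (apply (IH (par x) (par y)); auto using par_lt).
        rewrite <- Hp in E2.
        apply (heavy_port_inj (par x)); [repeat split; auto | repeat split; auto | exact E2].
Qed.

Lemma port_path_prefix_ancestor x y t : x < n -> y < n ->
  port_path y = port_path x ++ t -> exists j, Nat.iter j par y = x.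
Proof.
  intros Hx Hy. revert y Hy. induction t as [|a t IH] using rev_ind; intros y Hy E.
  - exists 0. rewrite app_nil_r in E. symmetry. now apply port_path_inj.
  - destruct (Nat.eq_dec y r) as [->|Hr].
    + rewrite port_path_root in E. apply (f_equal (@length nat)) in E.
      rewrite !length_app in E. simpl in E. lia.
    + rewrite port_path_par, app_assoc in E by auto. apply app_inj_tail in E as [E _].
      destruct (IH (par y) (par_lt y Hy) E) as [j J]. exists (S j).
      now rewrite Nat.iter_succ_r.
Qed.

End Tree.

(** * The labeling scheme *)

(* Length fields of [W] bits can record any [log2 p <= log2 n <= L] when [W = S (log2 L)]. *)
Definition field_width (L : nat) : nat := S (Nat.log2 L).

Definition route_label (n r d : nat) (par : nat -> nat) (u : nat) : list bool :=
  encode (field_width (Nat.log2_up n)) (port_path n r d par u).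

Definition next_port (pu pw : list nat) : nat :=
  match skipn (length pu) pw with
  | p :: _ => if list_eq_dec Nat.eq_dec (firstn (length pu) pw) pu then p else 0
  | [] => 0
  end.

Definition route_decoder (L : nat) (lu lw : list bool) : nat :=
  next_port (decode (length lu) (field_width L) lu) (decode (length lw) (field_width L) lw).

Lemma next_port_app pu p t : next_port pu (pu ++ p :: t) = p.
Proof.
  unfold next_port. destruct (firstn_skipn_app (length pu) pu (p :: t) eq_refl) as [-> ->].
  now destruct (list_eq_dec Nat.eq_dec pu pu).
Qed.

Lemma next_port_extends pu pw : next_port pu pw <> 0 -> exists p t, pw = pu ++ p :: t.
Proof.
  unfold next_port. destruct (skipn (length pu) pw) as [|p t] eqn:E; [tauto|].
  destruct (list_eq_dec Nat.eq_dec (firstn (length pu) pw) pu) as [F|]; [|tauto].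
  intros _. exists p, t. rewrite <- E, <- F at 1. symmetry. apply firstn_skipn.
Qed.

Section Labels.

Variables (n r d : nat) (par : nat -> nat).
Hypothesis tree : is_rooted_tree n r par.
Hypothesis depth : depth_le d n r par.

Lemma decode_route_label x : x < n ->
  decode (length (route_label n r d par x)) (field_width (Nat.log2_up n)) (route_label n r d par x)
  = port_path n r d par x.
Proof.
  intros Hx. unfold route_label. apply decode_encode; [unfold field_width; lia| |].
  - intros p Hp. split; [eapply port_path_pos; eauto|].
    pose proof (in_le_list_sum _ _ (in_map Nat.log2 _ _ Hp)).
    pose proof (port_path_log2_sum_le n r d par tree depth x Hx).
    pose proof (Nat.le_log2_log2_up n).
    assert (Nat.log2_up n < 2 ^ field_width (Nat.log2_up n)).
    { unfold field_width. destruct (Nat.log2_up n) eqn:E; [simpl; lia|].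
      apply Nat.log2_spec; lia. }
    lia.
  - rewrite length_encode. unfold field_width. nia.
Qed.

Lemma route_labels_correct :
  routing_correct n r par (heavy_port n r d par) (route_label n r d par) route_decoder.
Proof.
  intros u w Hu Hw Huw. unfold route_decoder. rewrite !decode_route_label by auto.
  split.
  - intros v Hc [k K]. destruct Hc as [Hv [Hvr Hpv]].
    destruct (port_path_descendant n r d par tree depth k w v Hw K) as [t ->].
    rewrite (port_path_par n r d par depth v Hv Hvr), Hpv, <- app_assoc.
    apply next_port_app.
  - intros Hnot.
    destruct (Nat.eq_dec (next_port (port_path n r d par u) (port_path n r d par w)) 0)
      as [|Hne]; [assumption|].
    exfalso. destruct (next_port_extends _ _ Hne) as [p [t E]].
    destruct (port_path_prefix_ancestor n r d par tree depth u w _ Hu Hw E) as [[|j] J].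
    + exact (Huw (eq_sym J)).
    + apply Hnot. eauto.
Qed.

Lemma length_route_label x : x < n ->
  length (route_label n r d par x) <= d * field_width (Nat.log2_up n) + Nat.log2 n.
Proof.
  intros Hx. unfold route_label. rewrite length_encode.
  pose proof (length_port_path n r d par x).
  pose proof (port_path_log2_sum_le n r d par tree depth x Hx). nia.
Qed.

End Labels.

(** * From bit counts to the real bound *)

Lemma ln2_pos : (0 < ln 2)%R.
Proof. pose proof ln_lt_2. lra. Qed.

Lemma log2R_le x y : (0 < x)%R -> (x <= y)%R -> (log2R x <= log2R y)%R.
Proof.
  intros Hx Hxy. unfold log2R, Rdiv. apply Rmult_le_compat_r.
  - left. apply Rinv_0_lt_compat, ln2_pos.
  - destruct (Rle_lt_or_eq_dec _ _ Hxy) as [H| ->]; [left; now apply ln_increasing | lra].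
Qed.

Lemma INR_log2_le k : 1 <= k -> (INR (Nat.log2 k) <= log2R (INR k))%R.
Proof.
  intros Hk. destruct (Nat.log2_spec k) as [Hlo _]; [lia|].
  apply le_INR in Hlo. rewrite pow_INR in Hlo. simpl INR in Hlo.
  replace (1 + 1)%R with 2%R in Hlo by lra.
  apply log2R_le in Hlo; [|apply pow_lt; lra].
  unfold log2R, Rdiv in *. rewrite ln_pow, Rmult_assoc, Rinv_r, Rmult_1_r in Hlo
    by (pose proof ln2_pos; lra).
  exact Hlo.
Qed.

Lemma field_width_le_loglog n : 16 <= n ->
  field_width (Nat.log2_up n) <= 2 * Nat.log2 (Nat.log2 n).
Proof.
  intros Hn. unfold field_width. set (m := Nat.log2 n).
  assert (Hm : 4 <= m) by (change 4 with (Nat.log2 16); apply Nat.log2_le_mono, Hn).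
  assert (Hlog : 2 <= Nat.log2 m) by (change 2 with (Nat.log2 4); apply Nat.log2_le_mono, Hm).
  assert (Nat.log2 (Nat.log2_up n) <= S (Nat.log2 m)).
  { rewrite <- Nat.log2_double by lia. apply Nat.log2_le_mono.
    pose proof (Nat.le_log2_up_succ_log2 n). lia. }
  lia.
Qed.

Lemma label_bound_real n d len : 16 <= n ->
  len <= d * field_width (Nat.log2_up n) + Nat.log2 n ->
  (INR len <= log2R (INR n) + INR (2 * d) * log2R (log2R (INR n)))%R.
Proof.
  intros Hn Hlen. pose proof (field_width_le_loglog n Hn).
  assert (Hm : 4 <= Nat.log2 n) by (change 4 with (Nat.log2 16); apply Nat.log2_le_mono, Hn).
  assert (Hlen' : len <= 2 * d * Nat.log2 (Nat.log2 n) + Nat.log2 n) by nia.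
  apply le_INR in Hlen'. rewrite plus_INR, mult_INR in Hlen'.
  pose proof (INR_log2_le n ltac:(lia)) as Hlog.
  pose proof (INR_log2_le (Nat.log2 n) ltac:(lia)) as Hloglog.
  assert (log2R (INR (Nat.log2 n)) <= log2R (log2R (INR n)))%R.
  { apply log2R_le; [apply lt_0_INR; lia | exact Hlog]. }
  assert (0 <= INR (2 * d))%R by apply pos_INR.
  assert (INR (2 * d) * INR (Nat.log2 (Nat.log2 n)) <= INR (2 * d) * log2R (log2R (INR n)))%R.
  { apply Rmult_le_compat_l; lra. }
  lra.
Qed.

Local Close Scope nat_scope.

Theorem mainTheorem6 :
  forall d : nat,
  exists (C : R) (N0 : nat) (dec : nat -> list bool -> list bool -> nat),
  forall (n r : nat) (par : nat -> nat),
    is_rooted_tree n r par -> depth_le d n r par ->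
    exists (port : nat -> nat -> nat) (lab : nat -> list bool),
      valid_ports n r par port /\
      routing_correct n r par port lab dec /\
      ((N0 <= n)%nat ->
        forall u, (u < n)%nat ->
          INR (length (lab u)) <= log2R (INR n) + C * log2R (log2R (INR n))).
Proof.
  intros d. exists (INR (2 * d)), 16%nat, route_decoder.
  intros n r par tree depth. exists (heavy_port n r d par), (route_label n r d par).
  split; [apply heavy_ports_valid|]. split; [now apply route_labels_correct|].
  intros Hn u Hu. apply label_bound_real; [exact Hn|]. now apply length_route_label.
Qed.
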